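(* Let $N,n,m,p$ be positive integers, $A\in\mathbb{R}^{n\times n}$, $B\in\mathbb{R}^{n\times p}$, $C\in\mathbb{R}^{m\times n}$, $H\in\mathbb{R}^{n\times m}$, $W=[w_{ij}]\in\mathbb{R}^{N\times N}$ with $w_{ii}=0$ for all $i$, $\Delta=\mathrm{diag}(\delta_1,\dots,\delta_N)$ with $\delta_i\in\{0,1\}$, and $h>0$. Put $\mathcal{B}(h)=\int_0^h e^{A\tau}d\tau\,B$, $\mathcal{H}(h)=\int_0^h e^{A\tau}d\tau\,HC$, $\Phi_s=I_N\otimes e^{Ah}+W\otimes\mathcal{H}(h)$, $\Psi_s=\Delta\otimes\mathcal{B}(h)$. Let $\sigma(W)=\{\lambda_1,\dots,\lambda_r\}$ be the distinct eigenvalues of $W$ and $E_i=e^{Ah}+\lambda_i\mathcal{H}(h)$. Assume $W$ is singular and $0\notin\sigma(E_i)$ for every $i=1,\dots,r$. If the networked sampled-data system $X(k+1)=\Phi_sX(k)+\Psi_sU(k)$ is controllable, then the pair $(e^{Ah},\mathcal{B}(h))$ is controllable.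
   Context: The networked sampled-data system is the discrete-time system $X(k+1)=\Phi_sX(k)+\Psi_sU(k)$; it is called controllable if every initial state can be steered to the origin in finitely many steps. For $F\in\mathbb{C}^{q\times q}$, $G\in\mathbb{C}^{q\times s}$, the pair $(F,G)$ is called controllable if $\mathrm{rank}[sI_q-F,\ G]=q$ for every $s\in\mathbb{C}$. $\sigma(\cdot)$ denotes the set of eigenvalues and $\otimes$ the Kronecker product. *)

From HB Require Import structures.
From mathcomp Require Import all_boot all_order all_algebra.
From mathcomp Require Import all_classical all_reals all_analysis.
From mathcomp Require Import complex mxtens.
Set Implicit Arguments. Unset Strict Implicit. Unset Printing Implicit Defensive.
Import Order.TTheory GRing.Theory Num.Theory numFieldNormedType.Exports.
Local Open Scope ring_scope.
Local Open Scope classical_set_scope.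

Section Defs.
Variable R : realType.

Definition expmx (n : nat) (A : 'M[R]_n) (t : R) : 'M[R]_n :=
  \matrix_(i, j) limn ((fun N : nat => \sum_(0 <= k < N) ((A ^+ k) i j * t ^+ k / (k`!)%:R)) : nat -> R).

Definition intexpmx (n : nat) (A : 'M[R]_n) (h : R) : 'M[R]_n :=
  \matrix_(i, j) Rintegral lebesgue_measure `[0, h] (fun tau => expmx A tau i j).

Local Open Scope complex_scope.

Definition cmx (k l : nat) (M : 'M[R]_(k, l)) : 'M[R[i]]_(k, l) :=
  map_mx (fun x : R => x%:C) M.

Definition controllable_pair (q s : nat) (F : 'M[R[i]]_q) (G : 'M[R[i]]_(q, s)) :=
  forall z : R[i], \rank (row_mx (z%:M - F) G) = q.

Fixpoint state_traj (d e : nat) (Phi : 'M[R]_d) (Psi : 'M[R]_(d, e))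
  (X0 : 'cV[R]_d) (U : nat -> 'cV[R]_e) (k : nat) : 'cV[R]_d :=
  match k with
  | 0 => X0
  | k'.+1 => Phi *m state_traj Phi Psi X0 U k' + Psi *m U k'
  end.

Definition ds_controllable (d e : nat) (Phi : 'M[R]_d) (Psi : 'M[R]_(d, e)) :=
  forall X0 : 'cV[R]_d, exists (k : nat) (U : nat -> 'cV[R]_e),
    state_traj Phi Psi X0 U k = 0.
End Defs.

From HB Require Import structures.
From mathcomp Require Import all_boot all_order all_algebra.
From mathcomp Require Import all_classical all_reals all_analysis.
From mathcomp Require Import complex mxtens.
Import Order.TTheory GRing.Theory Num.Theory numFieldNormedType.Exports.
Local Open Scope ring_scope.
Local Open Scope complex_scope.

(* If (e^{Ah}, B(h)) fails the rank test at s, there is a left eigenvector v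
   of e^{Ah} for s with v B(h) = 0.  Since W is singular, some xi != 0 has
   xi W = 0, and then xi (x) v is a left eigenvector of Phi_s for s that is
   annihilated by Psi_s.  Along every trajectory (xi (x) v) X(k) = s^k (xi (x) v) X(0),
   so steering every state to the origin forces s = 0; but then 0 would be an
   eigenvalue of E_i = e^{Ah} for the eigenvalue 0 of W. *)

Lemma mx_neq0P {K : nmodType} {m n} (M : 'M[K]_(m, n)) :
  reflect (exists i j, M i j != 0) (M != 0).
Proof.
apply: (iffP idP) => [Mnz | [i [j Mij]]]; last first.
  by apply: contraNneq Mij => ->; rewrite mxE.
apply/not_existsP => M0; move/negP: Mnz; apply; apply/eqP/matrixP => i j.
by rewrite mxE; case: (eqVneq (M i j) 0) => // Mij; case: (M0 i); exists j.
Qed.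

Lemma tensmx_neq0 {K : idomainType} {m n p q} {X : 'M[K]_(m, n)} {Y : 'M[K]_(p, q)} :
  X != 0 -> Y != 0 -> X *t Y != 0.
Proof.
move=> /mx_neq0P[i [k Xik]] /mx_neq0P[j [l Yjl]]; apply/mx_neq0P.
by exists (mxtens_index (i, j)), (mxtens_index (k, l)); rewrite tensmxE mulf_neq0.
Qed.

Lemma tensmxZr {K : comPzRingType} {m n p q} (X : 'M[K]_(m, n)) (Y : 'M[K]_(p, q)) a :
  X *t (a *: Y) = a *: (X *t Y).
Proof. by apply/matrixP => i j; rewrite !mxE mulrCA. Qed.

Lemma tensmx_left_eigen {K : comPzRingType} {N n} {W : 'M[K]_N} {F : 'M[K]_n}
    (G : 'M[K]_n) {xi : 'rV_N} {v : 'rV_n} {z} :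
  xi *m W = 0 -> v *m F = z *: v -> (xi *t v) *m (1%:M *t F + W *t G) = z *: (xi *t v).
Proof.
move=> xiW vF.
by rewrite mulmxDr !tensmx_mul mulmx1 xiW tens0mx addr0 vF tensmxZr.
Qed.

Lemma det0_left_null {K : fieldType} {n} (M : 'M[K]_n) :
  \det M = 0 -> exists2 x : 'rV_n, x != 0 & x *m M = 0.
Proof.
move=> detM; have : kermx M != 0.
  by rewrite kermx_eq0 row_free_unit unitmxE detM unitr0.
by case/rowV0Pn => x /sub_kermxP xM xnz; exists x.
Qed.

Lemma rank_deficit_left_eigen {K : fieldType} {q s} (F : 'M[K]_q) (G : 'M[K]_(q, s)) z :
  (\rank (row_mx (z%:M - F) G) < q)%N ->
  exists2 v : 'rV_q, v != 0 & v *m F = z *: v /\ v *m G = 0.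
Proof.
move=> rk_lt; have : kermx (row_mx (z%:M - F) G) != 0.
  by rewrite kermx_eq0 /row_free neq_ltn rk_lt.
case/rowV0Pn => v /sub_kermxP; rewrite mul_mx_row => /eqP.
rewrite row_mx_eq0 => /andP[/eqP vzF /eqP vG] vnz; exists v => //; split=> //.
by apply/esym/eqP; rewrite -subr_eq0 -mul_mx_scalar -mulmxBr vzF.
Qed.

Section ComplexifiedTrajectory.
Context {R : realType}.

Lemma cmxE {k l} (M : 'M[R]_(k, l)) : cmx M = map_mx (real_complex R) M.
Proof. by []. Qed.

Lemma state_traj_left_eigen {d e} {Phi : 'M[R]_d} {Psi : 'M[R]_(d, e)}
    {w : 'rV[R[i]]_d} {z} X0 U k :
  w *m cmx Phi = z *: w -> w *m cmx Psi = 0 ->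
  w *m cmx (state_traj Phi Psi X0 U k) = z ^+ k *: (w *m cmx X0).
Proof.
move=> wPhi wPsi; elim: k => [|k IHk] /=; first by rewrite expr0 scale1r.
rewrite cmxE map_mxD !map_mxM -!cmxE mulmxDr !mulmxA wPhi wPsi mul0mx addr0.
by rewrite -scalemxAl IHk scalerA exprS.
Qed.

Lemma ds_controllable_left_eigen0 {d e} {Phi : 'M[R]_d} {Psi : 'M[R]_(d, e)}
    {w : 'rV[R[i]]_d} {z} :
  ds_controllable Phi Psi -> w != 0 ->
  w *m cmx Phi = z *: w -> w *m cmx Psi = 0 -> z = 0.
Proof.
move=> ctrl /mx_neq0P[i [b wb]] wPhi wPsi.
have [k [U Xk0]] := ctrl (delta_mx b 0).
have := state_traj_left_eigen (delta_mx b 0) U k wPhi wPsi.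
rewrite Xk0 !cmxE map_mx0 map_delta_mx -colE mulmx0 => /eqP; rewrite eq_sym.
rewrite scaler_eq0 expf_eq0 => /orP[/andP[_ /eqP //] | /eqP/matrixP/(_ i 0)].
by rewrite !mxE => wb0; rewrite wb0 eqxx in wb.
Qed.

End ComplexifiedTrajectory.

Theorem corollary3 (R : realType) (N n m p : nat)
  (A : 'M[R]_n) (B : 'M[R]_(n, p)) (C : 'M[R]_(m, n)) (H : 'M[R]_(n, m))
  (W : 'M[R]_N) (delta : 'I_N -> bool) (h : R) :
  (0 < N)%N -> (0 < n)%N -> (0 < m)%N -> (0 < p)%N -> 0 < h ->
  (forall i : 'I_N, W i i = 0) ->
  let Bh := intexpmx A h *m B in
  let Hh := intexpmx A h *m (H *m C) in
  let Phi_s := (1%:M : 'M[R]_N) *t expmx A h + W *t Hh in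
  let Psi_s := diag_mx (\row_i ((delta i)%:R : R)) *t Bh in
  \det W = 0 ->
  (forall lam : R[i], eigenvalue (cmx W) lam ->
     ~~ eigenvalue (cmx (expmx A h) + lam *: cmx Hh) 0) ->
  ds_controllable Phi_s Psi_s ->
  controllable_pair (cmx (expmx A h)) (cmx Bh).
Proof.
move=> _ _ _ _ _ _ Bh Hh Phi_s Psi_s detW E_nonsingular ctrl z.
apply/eqP; rewrite eqn_leq rank_leq_row leqNgt; apply/negP.
case/rank_deficit_left_eigen => v vnz [vF vB].
have [xi xinz xiW] : exists2 xi : 'rV_N, xi != 0 & xi *m cmx W = 0.
  by apply: det0_left_null; rewrite cmxE det_map_mx detW rmorph0.
have wPhi : (xi *t v) *m cmx Phi_s = z *: (xi *t v).
  by rewrite cmxE map_mxD !map_mxT map_mx1 -!cmxE (tensmx_left_eigen _ xiW vF).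
have wPsi : (xi *t v) *m cmx Psi_s = 0.
  by rewrite cmxE map_mxT tensmx_mul -cmxE vB tensmx0.
have z0 := ds_controllable_left_eigen0 ctrl (tensmx_neq0 xinz vnz) wPhi wPsi.
have W0 : eigenvalue (cmx W) 0 by apply/eigenvalueP; exists xi; rewrite ?scale0r.
move/negP: (E_nonsingular 0 W0); rewrite scale0r addr0; apply.
by apply/eigenvalueP; exists v; rewrite // vF z0.
Qed.
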